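(* Let $\pi_1\in\mathfrak{S}_k$ and $\pi_2\in\mathfrak{S}_\ell$ be non-empty permutations and $1\le i\le\operatorname{slmax}(\pi_2)$. Then \begin{align*} \operatorname{lmax}(C_1(\pi_1,\pi_2))=\operatorname{lmax}(C_2(\pi_1,\pi_2,i))&=\operatorname{lmax}(\pi_1)+1,\\ \operatorname{rmax}(C_1(\pi_1,\pi_2))=\operatorname{rmax}(C_2(\pi_1,\pi_2,i))&=1+\operatorname{rmax}(\pi_2),\\ \operatorname{asc}(C_1(\pi_1,\pi_2))=\operatorname{asc}(C_2(\pi_1,\pi_2,i))&=\operatorname{asc}(\pi_1)+1+\operatorname{asc}(\pi_2),\\ \operatorname{des}(C_1(\pi_1,\pi_2))=\operatorname{des}(C_2(\pi_1,\pi_2,i))&=\operatorname{des}(\pi_1)+1+\operatorname{des}(\pi_2),\\ \operatorname{len}(C_1(\pi_1,\pi_2))=\operatorname{len}(C_2(\pi_1,\pi_2,i))&=\operatorname{len}(\pi_1)+1+\operatorname{len}(\pi_2),\\ \operatorname{sldes}(C_1(\pi_1,\pi_2))&=\operatorname{sldes}(\pi_1)+\operatorname{sldes}(\pi_2),\\ \operatorname{sldes}(C_2(\pi_1,\pi_2,i))&=\operatorname{sldes}(\pi_1)+\operatorname{sldes}(\pi_2)+1. \end{align*} Furthermore, when one of $\pi_1,\pi_2$ is empty, the formulas for $C_1(\pi_1,\pi_2)$ still hold, except that $\operatorname{asc}(C_1(\epsilon,\pi_2))=\operatorname{asc}(\pi_2)$ and $\operatorname{des}(C_1(\pi_1,\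epsilon))=\operatorname{des}(\pi_1)$.
   Context: For a finite sequence $A$ of distinct integers, the stack-sorting operator $\mathcal{S}$ is defined by $\mathcal{S}(\epsilon)=\epsilon$ for the empty sequence and, if $A$ is non-empty with largest element $m$, writing $A=A_L\cdot(m)\cdot A_R$ (concatenation), $\mathcal{S}(A)=\mathcal{S}(A_L)\cdot\mathcal{S}(A_R)\cdot(m)$. Permutations are viewed as sequences. For a sequence $\tau$: $\tau^{+k}$ adds $k$ to each element; for $k_1<k_2$, $\tau^{+(k_1,m,k_2)}$ adds $k_1$ to elements strictly smaller than $m$ and $k_2$ to the others. For a permutation $\sigma$: $\operatorname{len}(\sigma)$ is its length; $\operatorname{lmax}(\sigma)$ (resp. $\operatorname{rmax}(\sigma)$) is the number of indices $i$ with $\sigma(i)>\sigma(j)$ for all $j<i$ (resp. all $j>i$); $\operatorname{asc}(\sigma)$ (resp. $\operatorname{des}(\sigma)$) is the number of indices $i$ with $\sigma(i)<\sigma(i+1)$ (resp. $\sigma(i)>\sigma(i+1)$); $\operatorname{slmax}(\sigma)$ is the number of left-to-right maxima of $\mathcal{S}(\sigma)$; $\operatorname{sldes}(\sigma)$ is the number of elements $a$ such that $a$ precedes $a-1$ in $\mathcal{S}(\sigma)$. All these statistics are $0$ on the empty permutation $\epsilon$. For permutations $\pi_1\in\mathfrak{S}_k$, $\pi_2\in\mathfrak{S}_\ell$ (possibly empty, $\mathfrak{S}_0=\{\epsilon\}$), $C_1(\pi_1,\pi_2)=\pi_1\cdot(k+\ell+1)\cdot\pi_2^{+k}$; for non-empty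 $\pi_1,\pi_2$, with $a_1,\dots,a_t$ the values of the left-to-right maxima of $\mathcal{S}(\pi_2)$ in order and $1\le i\le t$, $C_2(\pi_1,\pi_2,i)=\pi_1^{+(0,k,a_i)}\cdot(k+\ell+1)\cdot\pi_2^{+(k-1,a_i+1,k)}$. *)

(* Permutations of [n] are sequences of naturals that are
   rearrangements of 1..n (one-line notation). *)
From mathcomp Require Import all_boot.
Set Implicit Arguments. Unset Strict Implicit. Unset Printing Implicit Defensive.

Definition is_perm (s : seq nat) : bool := perm_eq s (iota 1 (size s)).

Fixpoint ssort_fuel (n : nat) (s : seq nat) : seq nat :=
  match n with
  | 0 => s
  | n'.+1 =>
    if s is [::] then [::] else
    let m := \max_(x <- s) x in
    let i := index m s in
    ssort_fuel n' (take i s) ++ ssort_fuel n' (drop i.+1 s) ++ [:: m]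
  end.

Definition stack_sort (s : seq nat) : seq nat := ssort_fuel (size s) s.

Definition shift (k : nat) (s : seq nat) : seq nat := map (addn k) s.
Definition shift3 (k1 m k2 : nat) (s : seq nat) : seq nat :=
  map (fun x => if x < m then x + k1 else x + k2) s.

Definition len (s : seq nat) : nat := size s.

Definition lmax_vals (s : seq nat) : seq nat :=
  [seq nth 0 s i | i <- iota 0 (size s) &
     all (fun j => nth 0 s j < nth 0 s i) (iota 0 i)].
Definition lmax (s : seq nat) : nat := size (lmax_vals s).
Definition rmax (s : seq nat) : nat :=
  count (fun i => all (fun j => nth 0 s j < nth 0 s i)
                      (iota i.+1 (size s - i.+1))) (iota 0 (size s)).
Definition asc (s : seq nat) : nat :=
  count (fun i => nth 0 s i < nth 0 s i.+1) (iota 0 (size s).-1).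
Definition des (s : seq nat) : nat :=
  count (fun i => nth 0 s i > nth 0 s i.+1) (iota 0 (size s).-1).
Definition slmax (s : seq nat) : nat := lmax (stack_sort s).
Definition sldes (s : seq nat) : nat :=
  let t := stack_sort s in
  count (fun a => (0 < a) && (a.-1 \in t) && (index a t < index a.-1 t)) t.

Definition C1 (p1 p2 : seq nat) : seq nat :=
  p1 ++ [:: size p1 + size p2 + 1] ++ shift (size p1) p2.

(* i is 1-based: a_i = the i-th left-to-right maximum value of S(p2) *)
Definition C2 (p1 p2 : seq nat) (i : nat) : seq nat :=
  let k := size p1 in let l := size p2 in
  let a := nth 0 (lmax_vals (stack_sort p2)) i.-1 in
  shift3 0 k a p1 ++ [:: k + l + 1] ++ shift3 k.-1 a.+1 k p2.

(* Both C1 and C2 place the new maximum n = k + l + 1 between a copy of pi1 and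
   a copy of pi2, each transformed by a strictly increasing map.  Hence
   S(C) = S(left) S(right) n, S commutes with increasing maps, and lmax, rmax,
   asc, des are invariant under them and add up across the block structure.
   sldes counts the inverse descents of S (values a preceding a - 1).  These
   split into those inside S(left), those inside S(right), and the a of S(left)
   with a - 1 in S(right).  For C1 the blocks are the ranges [1, k] and
   [k + 1, k + l], so no cross pair exists.  For C2 the maps keep consecutive
   values consecutive except at k in pi1 and at a_i + 1 in pi2, and neither is
   an inverse descent: k ends S(pi1), and a_i + 1 cannot precede the
   left-to-right maximum a_i of S(pi2).  The one cross pair is k + a_i, the image
   of k, with k + a_i - 1, the image of a_i. *)

From mathcomp Require Import all_boot zify.
Set Implicit Arguments. Unset Strict Implicit. Unset Printing Implicit Defensive.

Lemma bigmax_seq_mem (s : seq nat) : s != [::] -> \max_(x <- s) x \in s.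
Proof.
elim: s => [|x s IHs] // _; rewrite big_cons in_cons.
have [->|s0] := eqVneq s [::]; first by rewrite big_nil maxn0 eqxx.
by rewrite /maxn; case: ltnP; rewrite ?eqxx // IHs ?orbT.
Qed.

Lemma bigmax_seq_id (s : seq nat) m :
  m \in s -> {in s, forall y, y <= m} -> \max_(x <- s) x = m.
Proof.
move=> ms ub; apply/eqP; rewrite eqn_leq (leq_bigmax_seq m) // andbT.
by apply/bigmax_leqP_seq => y ys _; apply: ub.
Qed.

Lemma ssort_fuelS n s : s != [::] ->
  ssort_fuel n.+1 s =
  ssort_fuel n (take (index (\max_(x <- s) x) s) s) ++
  ssort_fuel n (drop (index (\max_(x <- s) x) s).+1 s) ++ [:: \max_(x <- s) x].
Proof. by case: s. Qed.

Lemma ssort_fuel_eq n n' s : size s <= n -> size s <= n' ->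
  ssort_fuel n s = ssort_fuel n' s.
Proof.
elim: n n' s => [|n IHn] [|n'] s; have [->|s0] := eqVneq s [::] => //;
  rewrite ?leqn0 ?size_eq0 ?(negbTE s0) // => le_sn le_sn'.
rewrite !ssort_fuelS //.
have lt_i : index (\max_(x <- s) x) s < size s by rewrite index_mem bigmax_seq_mem.
move: (index _ s) lt_i => i lt_i.
by rewrite (IHn n' (take _ _)) ?(IHn n' (drop _ _)) // ?size_take ?size_drop
  ?lt_i; lia.
Qed.

Lemma max_pivotP (s : seq nat) (m := \max_(x <- s) x) : s != [::] ->
  exists A B, [/\ s = A ++ m :: B, m \notin A & {in A ++ B, forall y, y <= m}].
Proof.
move=> s0; exists (take (index m s) s), (drop (index m s).+1 s).
have def_s : s = take (index m s) s ++ m :: drop (index m s).+1 s.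
  by rewrite -{1}(cat_take_drop (index m s) s) (drop_nth 0) ?index_mem ?nth_index
    ?bigmax_seq_mem.
split=> // [|y yAB].
  by rewrite -has_pred1 has_take ?has_pred1 ?bigmax_seq_mem // ltnn.
by apply: leq_bigmax_seq; rewrite // def_s mem_cat in_cons orbCA -mem_cat yAB orbT.
Qed.

Lemma stack_sort_pivot (A : seq nat) m (B : seq nat) :
  m \notin A -> {in A ++ B, forall y, y <= m} ->
  stack_sort (A ++ m :: B) = stack_sort A ++ stack_sort B ++ [:: m].
Proof.
move=> mA ub; have AmB0 : A ++ m :: B != [::] by case: A {mA ub}.
have max_m : \max_(x <- A ++ m :: B) x = m.
  apply: bigmax_seq_id => [|y]; first by rewrite mem_cat mem_head orbT.
  by rewrite mem_cat in_cons orbCA -mem_cat => /predU1P [->|/ub].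
rewrite /stack_sort size_cat /= addnS ssort_fuelS // max_m take_pivot //.
rewrite index_pivot // drop_cat ltnNge leqnSn subSnn /= drop0.
by rewrite (@ssort_fuel_eq _ (size A)) ?(@ssort_fuel_eq _ (size B) B) ?leq_addr
  ?leq_addl.
Qed.

Lemma stack_sort_ind (P : seq nat -> Prop) : P [::] ->
  (forall (A : seq nat) m (B : seq nat),
     m \notin A -> {in A ++ B, forall y, y <= m} -> P A -> P B -> P (A ++ m :: B)) ->
  forall s, P s.
Proof.
move=> P0 Ppivot s; elim: {s}(size s) {-2}s (leqnn (size s)) => [|n IHn] s.
  by rewrite leqn0 size_eq0 => /eqP ->.
have [->//|s0 le_sn] := eqVneq s [::].
have [A [B [def_s mA ub]]] := max_pivotP s0.
have le_ABn : size A + size B <= n by move: le_sn; rewrite def_s size_cat /=; lia.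
by rewrite def_s; apply: Ppivot => //; apply: IHn; lia.
Qed.

Lemma perm_stack_sort s : perm_eq (stack_sort s) s.
Proof.
elim/stack_sort_ind: s => // A m B mA ub permA permB.
by rewrite stack_sort_pivot // perm_cat // perm_catC perm_cons.
Qed.

Lemma stack_sort_map f s : {homo f : x y / x < y} ->
  stack_sort (map f s) = map f (stack_sort s).
Proof.
move=> f_lt; have f_le := leq_mono f_lt.
elim/stack_sort_ind: s => // A m B mA ub IHA IHB.
rewrite map_cat /= !stack_sort_pivot ?map_cat ?IHA ?IHB ?mem_map //.
  exact: incn_inj.
by move=> z; rewrite -map_cat => /mapP [y yAB ->]; rewrite f_le ub.
Qed.

Lemma asc_cons x s : asc (x :: s) = (x < head x s) + asc s.
Proof. by rewrite /asc; case: s => [|y s] /=; rewrite ?ltnn // (iotaDl 1) count_map. Qed.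

Lemma des_cons x s : des (x :: s) = (head x s < x) + des s.
Proof. by rewrite /des; case: s => [|y s] /=; rewrite ?ltnn // (iotaDl 1) count_map. Qed.

Lemma all_nth_iota (P : pred nat) s :
  all (fun j => P (nth 0 s j)) (iota 0 (size s)) = all P s.
Proof. by rewrite -[in RHS](mkseq_nth 0 s) /mkseq all_map. Qed.

Lemma lmax_rcons s y : lmax (rcons s y) = lmax s + all (fun z => z < y) s.
Proof.
rewrite /lmax /lmax_vals !size_map !size_filter size_rcons -addn1 iotaD count_cat /=.
rewrite addn0 nth_rcons ltnn eqxx; congr (_ + nat_of_bool _).
  apply: eq_in_count => i; rewrite mem_iota => /andP [_ lt_is] /=.
  rewrite nth_rcons lt_is; apply: eq_in_all => j; rewrite mem_iota => /andP [_ lt_ji].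
  by rewrite nth_rcons (ltn_trans lt_ji lt_is).
rewrite -[in RHS]all_nth_iota; apply: eq_in_all => j.
by rewrite mem_iota => /andP [_ lt_js]; rewrite nth_rcons lt_js.
Qed.

Lemma rmax_cons x s : rmax (x :: s) = all (fun z => z < x) s + rmax s.
Proof.
rewrite /rmax /= subn1 /= (iotaDl 1 0) all_map count_map; congr (_ + _).
  by rewrite -[in RHS]all_nth_iota.
by apply: eq_count => i /=; rewrite (iotaDl 1) all_map.
Qed.

Section MaxPivot.
Variables (A B : seq nat) (N : nat).
Hypotheses (ltA : {in A, forall y, y < N}) (ltB : {in B, forall y, y < N}).

Lemma lmax_pivot : lmax (A ++ N :: B) = lmax A + 1.
Proof.
elim/last_ind: B ltB => [|B' y IHB] ltBy.
  by rewrite cats1 lmax_rcons (introT allP ltA).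
have ltB' : {in B', forall z, z < N}.
  by move=> z zB; rewrite ltBy // mem_rcons in_cons zB orbT.
rewrite -rcons_cons -rcons_cat lmax_rcons IHB //.
suff /negbTE -> : ~~ all (fun z => z < y) (A ++ N :: B') by rewrite addn0.
apply/allPn; exists N; first by rewrite mem_cat mem_head orbT.
by rewrite -leqNgt ltnW // ltBy // mem_rcons mem_head.
Qed.

Lemma rmax_pivot : rmax (A ++ N :: B) = 1 + rmax B.
Proof.
elim: A ltA => [|x A' IHA] ltA' /=; first by rewrite rmax_cons (introT allP ltB).
rewrite rmax_cons IHA => [|z zA]; last by rewrite ltA' // in_cons zA orbT.
suff /negbTE -> : ~~ all (fun z => z < x) (A' ++ N :: B) by [].
apply/allPn; exists N; first by rewrite mem_cat mem_head orbT.
by rewrite -leqNgt ltnW // ltA' // mem_head.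
Qed.

Lemma asc_pivot : asc (A ++ N :: B) = asc A + (A != [::]) + asc B.
Proof.
elim: A ltA => [|x A' IHA] ltA' /=.
  rewrite asc_cons; case: B ltB => [|y B'] ltB' /=; first by rewrite ltnn.
  by rewrite ltnNge ltnW ?ltB' ?mem_head.
rewrite !asc_cons IHA => [|z zA]; last by rewrite ltA' // in_cons zA orbT.
case: A' {IHA} ltA' => [|z A'] ltA' /=; last by lia.
by rewrite ltA' ?mem_head // ltnn; lia.
Qed.

Lemma des_pivot : des (A ++ N :: B) = des A + (B != [::]) + des B.
Proof.
elim: A ltA => [|x A' IHA] ltA' /=.
  rewrite des_cons; case: B ltB => [|y B'] ltB' /=; first by rewrite ltnn.
  by rewrite ltB' ?mem_head.
rewrite !des_cons IHA => [|z zA]; last by rewrite ltA' // in_cons zA orbT.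
case: A' {IHA} ltA' => [|z A'] ltA' /=; last by lia.
by rewrite ltnNge ltnW ?ltA' ?mem_head // ltnn; lia.
Qed.

End MaxPivot.

Section IncreasingMap.
Variable f : nat -> nat.
Hypothesis f_lt : {homo f : x y / x < y}.

Let ltn_f : {mono f : x y / x < y} := leqW_mono (leq_mono f_lt).

Lemma asc_map s : asc (map f s) = asc s.
Proof.
elim: s => [|x s IHs] //=; rewrite !asc_cons IHs.
by case: s {IHs} => [|y s] /=; rewrite ?ltnn ?ltn_f.
Qed.

Lemma des_map s : des (map f s) = des s.
Proof.
elim: s => [|x s IHs] //=; rewrite !des_cons IHs.
by case: s {IHs} => [|y s] /=; rewrite ?ltnn ?ltn_f.
Qed.

Lemma lmax_map s : lmax (map f s) = lmax s.
Proof.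
elim/last_ind: s => [|s y IHs] //; rewrite map_rcons !lmax_rcons IHs all_map.
by congr (_ + nat_of_bool _); apply: eq_all => z /=; rewrite ltn_f.
Qed.

Lemma rmax_map s : rmax (map f s) = rmax s.
Proof.
elim: s => [|x s IHs] //=; rewrite !rmax_cons IHs all_map.
by congr (nat_of_bool _ + _); apply: eq_all => z /=; rewrite ltn_f.
Qed.

End IncreasingMap.

Definition inv_des (t : seq nat) (a : nat) : bool :=
  (0 < a) && (a.-1 \in t) && (index a t < index a.-1 t).

Definition ides (t : seq nat) : nat := count (inv_des t) t.

Lemma sldesE s : sldes s = ides (stack_sort s).
Proof. by []. Qed.

Lemma inv_desNpred t a : a.-1 \notin t -> inv_des t a = false.
Proof. by move=> /negbTE a1t; rewrite /inv_des a1t andbF. Qed.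

Lemma inv_des_rcons t a : a \notin t -> inv_des (rcons t a) a = false.
Proof.
move=> aNt; rewrite /inv_des -cats1 index_cat (negbTE aNt) /= eqxx addn0.
case: (a.-1 \in _) / boolP => [|_]; last by rewrite andbF.
by rewrite -index_mem size_cat addn1 ltnS => /leq_gtF->; rewrite andbF.
Qed.

Section InvDesCat.
Variables u v : seq nat.
Hypothesis uv_uniq : uniq (u ++ v).

Let cross a := (0 < a) && (a.-1 \in v).

Lemma inv_des_catl a : a \in u -> inv_des (u ++ v) a = predU (inv_des u) cross a.
Proof.
move: uv_uniq; rewrite cat_uniq => /and3P [_ /hasPn uNv _] au.
rewrite /inv_des /cross /= mem_cat !index_cat au.
have [a1u|a1Nu] /= := boolP (a.-1 \in u).
  have /negbTE -> : a.-1 \notin v by apply: contraL a1u; apply: uNv.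
  by rewrite andbF orbF.
have lt_au : index a u < size u + index a.-1 v by rewrite ltn_addr ?index_mem.
by rewrite lt_au andbT andbF.
Qed.

Lemma inv_des_catr a : a \in v -> inv_des (u ++ v) a = inv_des v a.
Proof.
move: uv_uniq; rewrite cat_uniq => /and3P [_ /hasPn uNv _] av.
rewrite /inv_des mem_cat !index_cat (negbTE (uNv a av)).
have [a1u|_] /= := boolP (a.-1 \in u); last by rewrite ltn_add2l.
have /negbTE -> : a.-1 \notin v by apply: contraL a1u; apply: uNv.
have lt_a1u : index a.-1 u < size u + index a v by rewrite ltn_addr ?index_mem.
by rewrite (leq_gtF (ltnW lt_a1u)) !andbF.
Qed.

Lemma ides_cat : ides (u ++ v) = ides u + ides v + count cross u.
Proof.
rewrite /ides count_cat (eq_in_count inv_des_catl) (eq_in_count inv_des_catr).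
have := count_predUI (inv_des u) cross u.
rewrite (@eq_in_count _ (predI _ _) pred0) ?count_pred0 => [|a au /=].
  by rewrite addn0 => ->; rewrite addnAC.
move: uv_uniq; rewrite cat_uniq => /and3P [_ /hasPn uNv _].
rewrite /inv_des /cross.
by case: (boolP (a.-1 \in v)) => [/uNv/negbTE->|_]; rewrite ?andbF.
Qed.

End InvDesCat.

Lemma sldes_pivot (A : seq nat) N (B : seq nat) : uniq (A ++ N :: B) ->
  {in A, forall y, y < N} -> {in B, forall y, y < N} ->
  sldes (A ++ N :: B) =
  sldes A + sldes B + count (fun a => (0 < a) && (a.-1 \in B)) A.
Proof.
move=> uniq_ANB ltA ltB.
have pred_neqN y : y < N -> (y.-1 \in [:: N]) = false.
  by move=> ltyN; rewrite mem_seq1 ltn_eqF // (leq_ltn_trans (leq_pred y)).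
have NA : N \notin A by apply/negP => /ltA; rewrite ltnn.
rewrite sldesE stack_sort_pivot // => [|y]; last first.
  by rewrite mem_cat => /orP [/ltA|/ltB] /ltnW.
have perm_sort : perm_eq (stack_sort A ++ stack_sort B ++ [:: N]) (A ++ N :: B).
  by rewrite perm_cat ?perm_stack_sort // perm_catC perm_cons perm_stack_sort.
have uniq_sort := uniq_ANB; rewrite -(perm_uniq perm_sort) in uniq_sort.
rewrite ides_cat // ides_cat; last by move: uniq_sort; rewrite cat_uniq => /and3P [].
have -> : ides [:: N] = 0 by rewrite /ides /= -[[:: N]]/(rcons [::] N) inv_des_rcons.
rewrite (permP (perm_stack_sort A)) -!sldesE addn0.
have -> : count (fun a => (0 < a) && (a.-1 \in [:: N])) (stack_sort B) = 0.
  rewrite (@eq_in_count _ _ pred0) ?count_pred0 // => a.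
  by rewrite (perm_mem (perm_stack_sort B)) => /ltB /pred_neqN ->; rewrite andbF.
rewrite addn0; congr (_ + _); apply: eq_in_count => a aA /=.
by rewrite mem_cat pred_neqN ?ltA // orbF (perm_mem (perm_stack_sort B)).
Qed.

Lemma inv_des_map f t x : injective f -> 0 < x -> f x.-1 = (f x).-1 ->
  inv_des (map f t) (f x) = inv_des t x.
Proof.
move=> f_inj x_gt0 f_pred; have fx_gt0 : 0 < f x.
  rewrite lt0n; apply/eqP => fx0.
  have /f_inj : f x.-1 = f x by rewrite f_pred fx0.
  lia.
by rewrite /inv_des -f_pred mem_map // !index_map // x_gt0 fx_gt0.
Qed.

Definition bump3 k1 m k2 x := if x < m then x + k1 else x + k2.

Lemma shift3E k1 m k2 s : shift3 k1 m k2 s = map (bump3 k1 m k2) s.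
Proof. by []. Qed.

Lemma bump3_lt k1 m k2 : k1 <= k2 -> {homo bump3 k1 m k2 : x y / x < y}.
Proof.
by move=> le_k x y lt_xy; rewrite /bump3; case: (ltnP x m); case: (ltnP y m); lia.
Qed.

Lemma sldes_shift3 k1 m k2 s : k1 < k2 -> 0 \notin s ->
  ~~ inv_des (stack_sort s) m -> sldes (shift3 k1 m k2 s) = sldes s.
Proof.
move=> lt_k s_gt0 mNdes; have f_lt := bump3_lt m (ltnW lt_k).
rewrite shift3E !sldesE stack_sort_map // /ides count_map.
apply: eq_in_count => x; rewrite (perm_mem (perm_stack_sort s)) => xs /=.
have [-> | neq_xm] := eqVneq x m.
  (* Since [k1 < k2], the value just below the image of [m] is not attained. *)
  rewrite (negbTE mNdes) inv_desNpred //; apply/mapP => -[y _].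
  by rewrite /bump3 ltnn; case: (ltnP y m); lia.
have x_gt0 : 0 < x by rewrite lt0n; apply: contraNneq s_gt0 => <-.
apply: inv_des_map => //; first exact/incn_inj/leq_mono.
by move: neq_xm; rewrite /bump3; case: (ltnP x m); case: (ltnP x.-1 m); lia.
Qed.

Lemma sldes_shift k s : 0 \notin s -> sldes (shift k s) = sldes s.
Proof.
move=> s_gt0; have [->|k_gt0] := posnP k; first by rewrite /shift map_id.
have -> : shift k s = shift3 0 0 k s by apply: eq_map => x; rewrite addnC.
by rewrite sldes_shift3.
Qed.

Lemma inv_des_stack_sort_max s :
  uniq s -> ~~ inv_des (stack_sort s) (\max_(x <- s) x).
Proof.
have [->|s0 s_uniq] := eqVneq s [::]; first by rewrite big_nil.
have [A [B [def_s mA ub]]] := max_pivotP s0.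
set m := \max_(x <- s) x in def_s mA ub *.
have sort_uniq : uniq (stack_sort s) by rewrite (perm_uniq (perm_stack_sort s)).
move: sort_uniq; rewrite def_s stack_sort_pivot //.
by rewrite catA cats1 rcons_uniq => /andP [mNAB _]; rewrite inv_des_rcons.
Qed.

Lemma mem_lmax_vals t a : a \in lmax_vals t -> a \in t.
Proof.
by move=> /mapP [j]; rewrite mem_filter mem_iota => /and3P [_ _ lt_jt] ->; apply: mem_nth.
Qed.

Lemma lmax_vals_ltn t a y : uniq t -> a \in lmax_vals t -> y \in t ->
  index y t < index a t -> y < a.
Proof.
move=> t_uniq /mapP [j]; rewrite mem_filter mem_iota add0n => /and3P [lmax_j _ lt_jt] ->.
rewrite index_uniq // => yt lt_yj; move/allP: lmax_j => /(_ (index y t)).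
by rewrite mem_iota lt_yj nth_index //; apply.
Qed.

Lemma inv_des_succ_lmax_vals t a : uniq t -> a \in lmax_vals t -> ~~ inv_des t a.+1.
Proof.
move=> t_uniq a_lmax; apply/negP; rewrite /inv_des => /andP [/andP [_ a_t] lt_idx].
have a1t : a.+1 \in t by rewrite -index_mem (ltn_trans lt_idx) ?index_mem.
by have := lmax_vals_ltn t_uniq a_lmax a1t lt_idx; rewrite ltnNge leqnSn.
Qed.

Lemma is_perm_uniq s : is_perm s -> uniq s.
Proof. by move=> s_perm; rewrite (perm_uniq s_perm) iota_uniq. Qed.

Lemma mem_is_perm s x : is_perm s -> (x \in s) = (0 < x <= size s).
Proof. by move=> s_perm; rewrite (perm_mem s_perm) mem_iota add1n ltnS. Qed.

Lemma is_perm_max s : is_perm s -> \max_(x <- s) x = size s.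
Proof.
move=> s_perm; have [->|s0] := eqVneq s [::]; first by rewrite big_nil.
apply: bigmax_seq_id => [|y]; rewrite !mem_is_perm // ?leqnn ?andbT ?lt0n ?size_eq0 //.
by case/andP.
Qed.

Lemma uniq_pivot (A : seq nat) N (B : seq nat) : uniq A -> uniq B ->
  {in A, forall y, y < N} -> {in B, forall y, y < N} ->
  {in A, forall x, x \notin B} -> uniq (A ++ N :: B).
Proof.
move=> A_uniq B_uniq ltA ltB AnB; rewrite cat_uniq A_uniq /= B_uniq andbT.
have /negbTE -> : N \notin A by apply/negP => /ltA; rewrite ltnn.
have /negbTE -> /= : N \notin B by apply/negP => /ltB; rewrite ltnn.
by rewrite andbT; apply/hasPn => x xB; apply: contraL xB; apply: AnB.
Qed.

Lemma len_C1 p1 p2 : len (C1 p1 p2) = len p1 + 1 + len p2.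
Proof. by rewrite /len size_cat /= size_map; lia. Qed.

Lemma len_C2 p1 p2 i : len (C2 p1 p2 i) = len p1 + 1 + len p2.
Proof. by rewrite /len size_cat /= !size_map; lia. Qed.

Section C1.
Variables p1 p2 : seq nat.
Hypotheses (p1_perm : is_perm p1) (p2_perm : is_perm p2).
Local Notation k := (size p1).
Local Notation l := (size p2).

Lemma C1E : C1 p1 p2 = p1 ++ (k + l + 1) :: shift k p2.
Proof. by []. Qed.

Let shift_incr : {homo addn k : x y / x < y}.
Proof. by move=> x y; rewrite ltn_add2l. Qed.

Let left_lt_top : {in p1, forall y, y < k + l + 1}.
Proof. by move=> y; rewrite mem_is_perm //; lia. Qed.

Let right_lt_top : {in shift k p2, forall y, y < k + l + 1}.
Proof. by move=> z /mapP [y]; rewrite mem_is_perm // => y_range ->; lia. Qed.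

Lemma lmax_C1 : lmax (C1 p1 p2) = lmax p1 + 1.
Proof. by rewrite C1E lmax_pivot. Qed.

Lemma rmax_C1 : rmax (C1 p1 p2) = 1 + rmax p2.
Proof. by rewrite C1E rmax_pivot // rmax_map. Qed.

Lemma asc_C1 : asc (C1 p1 p2) = asc p1 + (p1 != [::]) + asc p2.
Proof. by rewrite C1E asc_pivot // asc_map. Qed.

Lemma des_C1 : des (C1 p1 p2) = des p1 + (p2 != [::]) + des p2.
Proof. by rewrite C1E des_pivot // des_map // -size_eq0 size_map size_eq0. Qed.

Let C1_uniq : uniq (C1 p1 p2).
Proof.
rewrite C1E; apply: uniq_pivot => //; first exact: is_perm_uniq.
  by rewrite map_inj_uniq ?is_perm_uniq //; apply: addnI.
move=> x; rewrite mem_is_perm // => x_range; apply/mapP => -[y].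
by rewrite mem_is_perm //; lia.
Qed.

Lemma sldes_C1 : sldes (C1 p1 p2) = sldes p1 + sldes p2.
Proof.
rewrite C1E sldes_pivot -?C1E // sldes_shift ?mem_is_perm //.
rewrite (@eq_in_count _ _ pred0) ?count_pred0 ?addn0 // => x.
rewrite mem_is_perm // => x_range /=; apply/negbTE/nandP; right.
by apply/mapP => -[y]; rewrite mem_is_perm //; lia.
Qed.

End C1.

Section C2.
Variables (p1 p2 : seq nat) (i : nat).
Hypotheses (p1_perm : is_perm p1) (p2_perm : is_perm p2) (p1_ne0 : p1 != [::]).
Hypothesis i_range : 1 <= i <= slmax p2.
Local Notation k := (size p1).
Local Notation l := (size p2).
Local Notation a := (nth 0 (lmax_vals (stack_sort p2)) i.-1).

Lemma C2E : C2 p1 p2 i = shift3 0 k a p1 ++ (k + l + 1) :: shift3 k.-1 a.+1 k p2.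
Proof. by []. Qed.

Let k_gt0 : 0 < k.
Proof. by rewrite lt0n size_eq0. Qed.

Let a_lmax : a \in lmax_vals (stack_sort p2).
Proof. by case/andP: i_range => i_gt0 le_il; rewrite mem_nth // prednK. Qed.

Let a_range : 0 < a <= l.
Proof. by rewrite -mem_is_perm // -(perm_mem (perm_stack_sort p2)) mem_lmax_vals. Qed.

Let left_incr : {homo bump3 0 k a : x y / x < y}.
Proof. exact: bump3_lt. Qed.

Let right_incr : {homo bump3 k.-1 a.+1 k : x y / x < y}.
Proof. exact/bump3_lt/leq_pred. Qed.

Let left_lt_top : {in shift3 0 k a p1, forall y, y < k + l + 1}.
Proof.
by move=> z /mapP [y]; rewrite mem_is_perm // /bump3 => y_range ->; case: (ltnP y k); lia.
Qed.

Let right_lt_top : {in shift3 k.-1 a.+1 k p2, forall y, y < k + l + 1}.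
Proof.
move=> z /mapP [y]; rewrite mem_is_perm // /bump3 => y_range ->.
by case: (ltnP y a.+1); lia.
Qed.

Lemma lmax_C2 : lmax (C2 p1 p2 i) = lmax p1 + 1.
Proof. by rewrite C2E lmax_pivot // lmax_map. Qed.

Lemma rmax_C2 : rmax (C2 p1 p2 i) = 1 + rmax p2.
Proof. by rewrite C2E rmax_pivot // rmax_map. Qed.

Lemma asc_C2 : asc (C2 p1 p2 i) = asc p1 + 1 + asc p2.
Proof.
by rewrite C2E asc_pivot // !asc_map // -size_eq0 size_map size_eq0 p1_ne0.
Qed.

Lemma des_C2 : des (C2 p1 p2 i) = des p1 + 1 + des p2.
Proof.
have p2_ne0 : p2 != [::].
  by rewrite -size_eq0 -lt0n; case/andP: a_range => a_gt0 /(leq_trans a_gt0).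
by rewrite C2E des_pivot // !des_map // -size_eq0 size_map size_eq0 p2_ne0.
Qed.

Let C2_uniq : uniq (C2 p1 p2 i).
Proof.
rewrite C2E; apply: uniq_pivot => //.
- by rewrite map_inj_uniq ?is_perm_uniq //; apply/incn_inj/leq_mono.
- by rewrite map_inj_uniq ?is_perm_uniq //; apply/incn_inj/leq_mono.
move=> z /mapP [x]; rewrite mem_is_perm // => x_range ->; apply/mapP => -[y].
by rewrite mem_is_perm // /bump3 => y_range; case: (ltnP x k); case: (ltnP y a.+1); lia.
Qed.

Let cross_C2 :
  count (fun x => (0 < x) && (x.-1 \in shift3 k.-1 a.+1 k p2)) (shift3 0 k a p1) = 1.
Proof.
rewrite count_map (@eq_in_count _ _ (pred1 k)) => [|x].
  by rewrite count_uniq_mem ?is_perm_uniq // mem_is_perm // leqnn k_gt0.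
rewrite mem_is_perm // => x_range /=.
have [->|neq_xk] := eqVneq x k.
  rewrite /bump3 ltnn (ltn_addr _ k_gt0) /=; apply/mapP; exists a.
    by rewrite mem_is_perm.
  by rewrite ltnSn; lia.
apply/negbTE/nandP; right; apply/mapP => -[y]; rewrite mem_is_perm // /bump3 => y_range.
by case: (ltnP x k); case: (ltnP y a.+1); lia.
Qed.

Lemma sldes_C2 : sldes (C2 p1 p2 i) = sldes p1 + sldes p2 + 1.
Proof.
rewrite C2E sldes_pivot -?C2E // cross_C2 !sldes_shift3 ?mem_is_perm //;
  try by case/andP: a_range.
- by rewrite ltn_predL.
- apply: inv_des_succ_lmax_vals => //.
  by rewrite (perm_uniq (perm_stack_sort p2)) is_perm_uniq.
by rewrite -[X in inv_des _ X](is_perm_max p1_perm) inv_des_stack_sort_max ?is_perm_uniq.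
Qed.

End C2.

Theorem proposition9 :
  (forall (p1 p2 : seq nat) (i : nat),
    is_perm p1 -> is_perm p2 -> p1 != [::] -> p2 != [::] ->
    1 <= i <= slmax p2 ->
    ((lmax (C1 p1 p2) = lmax p1 + 1 /\ lmax (C2 p1 p2 i) = lmax p1 + 1) /\
        (rmax (C1 p1 p2) = 1 + rmax p2 /\ rmax (C2 p1 p2 i) = 1 + rmax p2) /\
        (asc (C1 p1 p2) = asc p1 + 1 + asc p2 /\
          asc (C2 p1 p2 i) = asc p1 + 1 + asc p2) /\
        (des (C1 p1 p2) = des p1 + 1 + des p2 /\
          des (C2 p1 p2 i) = des p1 + 1 + des p2) /\
        (len (C1 p1 p2) = len p1 + 1 + len p2 /\
          len (C2 p1 p2 i) = len p1 + 1 + len p2) /\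
        sldes (C1 p1 p2) = sldes p1 + sldes p2 /\
        sldes (C2 p1 p2 i) = sldes p1 + sldes p2 + 1)) /\
  (forall (p1 p2 : seq nat),
    is_perm p1 -> is_perm p2 -> (p1 == [::]) || (p2 == [::]) ->
    [/\ lmax (C1 p1 p2) = lmax p1 + 1 /\
        rmax (C1 p1 p2) = 1 + rmax p2,
        (if p1 == [::] then asc (C1 p1 p2) = asc p2
         else asc (C1 p1 p2) = asc p1 + 1 + asc p2),
        (if p2 == [::] then des (C1 p1 p2) = des p1
         else des (C1 p1 p2) = des p1 + 1 + des p2),
        len (C1 p1 p2) = len p1 + 1 + len p2 &
        sldes (C1 p1 p2) = sldes p1 + sldes p2]).
Proof.
split=> [p1 p2 i p1_perm p2_perm p1_ne0 p2_ne0 i_range | p1 p2 p1_perm p2_perm _].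
  rewrite lmax_C1 ?rmax_C1 ?asc_C1 ?des_C1 ?len_C1 ?sldes_C1 // p1_ne0 p2_ne0.
  by rewrite lmax_C2 ?rmax_C2 ?asc_C2 ?des_C2 ?len_C2 ?sldes_C2.
rewrite lmax_C1 ?rmax_C1 ?asc_C1 ?des_C1 ?len_C1 ?sldes_C1 //.
by split=> //; [case: eqVneq => [->|] | case: eqVneq => [->|]]; rewrite ?addn0.
Qed.
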